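(* Let $a,b,h\in\mathbb{R}$ with $h>0$ and $\frac{b-a}{h}\in\mathbb{N}\setminus\{1\}$, let $\gamma,A\ge0$ and $\mu=\frac{4}{h^2}\sin^2\big(\frac{\pi h}{4(b-a)}\big)$. Then the problem $$-D_h^+D_h^-v(x)=\mu v(x)-A\ \ (x\in(a,b)_h),\qquad v(a)=\gamma,\ v(b)=0,$$ has the unique solution $$v(x)=\Big(\gamma-\frac{A}{\mu}\Big)\cos\Big(\frac{\pi(x-a)}{2(b-a)}\Big)-\frac{A}{\mu}\sin\Big(\frac{\pi(x-a)}{2(b-a)}\Big)+\frac{A}{\mu},\quad x\in[a,b]_h,$$ and it satisfies $-D_h^+v(a)\le\big(\gamma+(b-a)^2A\big)\frac{\pi}{2(b-a)}$.
   Context: $[a,b]_h=[a,b]\cap(a+h\mathbb{Z})$, $(a,b)_h=(a,b)\cap(a+h\mathbb{Z})$. $D_h^+v(x)=\frac{v(x+h)-v(x)}{h}$, $D_h^-v(x)=\frac{v(x)-v(x-h)}{h}$. *)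

From Stdlib Require Import Reals Lra.
Open Scope R_scope.

Definition Dhp (h : R) (v : R -> R) (x : R) : R := (v (x + h) - v x) / h.
Definition Dhm (h : R) (v : R -> R) (x : R) : R := (v x - v (x - h)) / h.

Definition in_closed_grid (a b h x : R) : Prop :=
  a <= x <= b /\ exists k : Z, x = a + IZR k * h.
Definition in_open_grid (a b h x : R) : Prop :=
  a < x < b /\ exists k : Z, x = a + IZR k * h.

Definition solves_problem (a b h mu A gamma : R) (v : R -> R) : Prop :=
  (forall x, in_open_grid a b h x -> - Dhp h (Dhm h v) x = mu * v x - A) /\
  v a = gamma /\ v b = 0.

(** Shifting the argument by [h] shifts the phase [π (x - a) / (2 (b - a))] of the
    profile by [2 t], where [t = π h / (4 (b - a))], and
    [cos (θ + 2t) + cos (θ - 2t) = 2 cos (2t) cos θ] (likewise for [sin]); hence the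
    second difference of the profile is [-4 sin^2 t = -μ h^2] times its oscillating
    part.  The difference [w] of two solutions along the grid obeys the Chebyshev
    recurrence [w (k+2) = 2 cos (2t) w (k+1) - w k] with [w 0 = 0], so
    [w k sin (2t) = w 1 sin (2 k t)]; since [2 N t = π/2], [w N = 0] forces [w 1 = 0]
    and then [w = 0].  The slope bound follows from [sin t <= t] and
    [sin t >= 5 t / 6]. *)
From Stdlib Require Import Reals Lra Lia ZArith Arith.
Open Scope R_scope.

Lemma Dhp_Dhm_eq (h : R) (v : R -> R) (y : R) : h <> 0 ->
  Dhp h (Dhm h v) y = (v (y + h) - 2 * v y + v (y - h)) / h ^ 2.
Proof.
  intros Hh; unfold Dhp, Dhm.
  replace (y + h - h) with y by ring.
  field; exact Hh.
Qed.

Lemma five_sixths_le_sin (x : R) : 0 <= x <= 1 -> 5 / 6 * x <= sin x.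
Proof.
  intros [H0 H1].
  assert (Hpi : 3 < PI) by (generalize PI2_3_2; lra).
  destruct (sin_bound x 0 H0 ltac:(lra)) as [Hlow _].
  unfold sin_approx, sin_term in Hlow; simpl in Hlow.
  assert (Hcube : x * (x * (x * 1)) <= x) by nra.
  lra.
Qed.

Lemma chebyshev_sin_recurrence (w : nat -> R) (theta : R) (n : nat) :
  w 0%nat = 0 ->
  (forall k, (k + 2 <= n)%nat -> w (k + 2)%nat = 2 * cos theta * w (k + 1)%nat - w k) ->
  forall k, (k <= n)%nat -> w k * sin theta = w 1%nat * sin (INR k * theta).
Proof.
  intros Hw0 Hrec k.
  induction k as [k IH] using (well_founded_induction lt_wf); intros Hk.
  destruct k as [|[|j]].
  - rewrite Hw0, Rmult_0_l, Rmult_0_l, sin_0; ring.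
  - simpl INR; rewrite Rmult_1_l; reflexivity.
  - assert (Hj : (S (S j)) = (j + 2)%nat) by lia.
    rewrite Hj, (Hrec j ltac:(lia)).
    assert (IH0 := IH j ltac:(lia) ltac:(lia)).
    assert (IH1 := IH (j + 1)%nat ltac:(lia) ltac:(lia)).
    set (t := INR (j + 1) * theta) in IH1.
    replace (INR j * theta) with (t - theta) in IH0
      by (unfold t; rewrite plus_INR; simpl; ring).
    replace (INR (j + 2) * theta) with (t + theta)
      by (unfold t; rewrite !plus_INR; simpl; ring).
    rewrite sin_minus in IH0; rewrite sin_plus.
    replace ((2 * cos theta * w (j + 1)%nat - w j) * sin theta)
      with (2 * cos theta * (w (j + 1)%nat * sin theta) - w j * sin theta) by ring.
    rewrite IH0, IH1; ring.
Qed.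

Lemma chebyshev_dirichlet_trivial (w : nat -> R) (theta : R) (n : nat) :
  w 0%nat = 0 -> w n = 0 ->
  (forall k, (k + 2 <= n)%nat -> w (k + 2)%nat = 2 * cos theta * w (k + 1)%nat - w k) ->
  sin theta <> 0 -> sin (INR n * theta) <> 0 ->
  forall k, (k <= n)%nat -> w k = 0.
Proof.
  intros Hw0 Hwn Hrec Hs Hsn k Hk.
  assert (Hcheb := chebyshev_sin_recurrence w theta n Hw0 Hrec).
  assert (Hw1 : w 1%nat = 0).
  { assert (Hn := Hcheb n (Nat.le_refl n)); rewrite Hwn, Rmult_0_l in Hn.
    destruct (Rmult_integral _ _ (eq_sym Hn)); [assumption | contradiction]. }
  assert (Hk' := Hcheb k Hk); rewrite Hw1, Rmult_0_l in Hk'.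
  destruct (Rmult_integral _ _ Hk'); [assumption | contradiction].
Qed.

Lemma closed_grid_index (a b h x : R) (N : nat) :
  0 < h -> b - a = INR N * h -> in_closed_grid a b h x ->
  exists k, (k <= N)%nat /\ x = a + INR k * h.
Proof.
  intros Hh HL [[Hax Hxb] [z Hz]].
  assert (Hz0 : (0 <= z)%Z).
  { apply le_IZR; destruct (Rle_or_lt 0 (IZR z)); [assumption | nra]. }
  exists (Z.to_nat z).
  rewrite INR_IZR_INZ, Z2Nat.id by exact Hz0.
  split; [| exact Hz].
  apply Nat2Z.inj_le; rewrite Z2Nat.id by exact Hz0.
  apply le_IZR; rewrite <- INR_IZR_INZ.
  destruct (Rle_or_lt (IZR z) (INR N)); [assumption | nra].
Qed.

Lemma open_grid_index (a b h : R) (N k : nat) :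
  0 < h -> b - a = INR N * h -> (0 < k < N)%nat -> in_open_grid a b h (a + INR k * h).
Proof.
  intros Hh HL [Hk0 HkN]; split.
  - apply lt_INR in Hk0, HkN; simpl in Hk0; split; nra.
  - exists (Z.of_nat k); rewrite <- INR_IZR_INZ; reflexivity.
Qed.

Lemma solves_problem_unique (a b h mu A gamma theta : R) (N : nat) (u v : R -> R) :
  0 < h -> b - a = INR N * h -> mu * h ^ 2 = 2 - 2 * cos theta ->
  sin theta <> 0 -> sin (INR N * theta) <> 0 ->
  solves_problem a b h mu A gamma u -> solves_problem a b h mu A gamma v ->
  forall x, in_closed_grid a b h x -> u x = v x.
Proof.
  intros Hh HL Hmu Hs HsN [Hu [Hua Hub]] [Hv [Hva Hvb]] x Hx.
  set (w := fun k : nat => u (a + INR k * h) - v (a + INR k * h)).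
  assert (Hw0 : w 0%nat = 0).
  { unfold w; simpl INR; rewrite Rmult_0_l, Rplus_0_r, Hua, Hva; ring. }
  assert (HwN : w N = 0).
  { unfold w; replace (a + INR N * h) with b by lra; rewrite Hub, Hvb; ring. }
  assert (Hrec : forall k, (k + 2 <= N)%nat ->
            w (k + 2)%nat = 2 * cos theta * w (k + 1)%nat - w k).
  { intros k Hk; set (y := a + INR (k + 1) * h).
    assert (Hy := open_grid_index a b h N (k + 1) Hh HL ltac:(lia)); fold y in Hy.
    assert (Hy2 : a + INR (k + 2) * h = y + h) by (unfold y; rewrite !plus_INR; simpl; ring).
    assert (Hy0 : a + INR k * h = y - h) by (unfold y; rewrite plus_INR; simpl; ring).
    assert (Eu := Hu y Hy); assert (Ev := Hv y Hy).
    rewrite Dhp_Dhm_eq in Eu, Ev by lra.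
    assert (Eu' : u (y + h) - 2 * u y + u (y - h) = - h ^ 2 * (mu * u y - A))
      by (rewrite <- Eu; field; lra).
    assert (Ev' : v (y + h) - 2 * v y + v (y - h) = - h ^ 2 * (mu * v y - A))
      by (rewrite <- Ev; field; lra).
    assert (Hsecond : w (k + 2)%nat - 2 * w (k + 1)%nat + w k = - (mu * h ^ 2) * w (k + 1)%nat)
      by (unfold w; fold y; rewrite Hy2, Hy0; lra).
    rewrite Hmu in Hsecond; lra. }
  destruct (closed_grid_index a b h x N Hh HL Hx) as [k [Hk ->]].
  assert (Hwk := chebyshev_dirichlet_trivial w theta N Hw0 HwN Hrec Hs HsN k Hk).
  unfold w in Hwk; lra.
Qed.

Definition dirichlet_mu (a b h : R) : R :=
  4 / h ^ 2 * sin (PI * h / (4 * (b - a))) ^ 2.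

Definition dirichlet_profile (a b h gamma A x : R) : R :=
  (gamma - A / dirichlet_mu a b h) * cos (PI * (x - a) / (2 * (b - a)))
  - A / dirichlet_mu a b h * sin (PI * (x - a) / (2 * (b - a))) + A / dirichlet_mu a b h.

Lemma trig_second_difference (alpha beta c t d : R) :
  (alpha * cos (t + d) + beta * sin (t + d) + c)
  - 2 * (alpha * cos t + beta * sin t + c)
  + (alpha * cos (t - d) + beta * sin (t - d) + c)
  = - 4 * sin (d / 2) ^ 2 * (alpha * cos t + beta * sin t).
Proof.
  rewrite cos_plus, cos_minus, sin_plus, sin_minus.
  replace (cos d) with (cos (2 * (d / 2))) by (f_equal; field).
  rewrite cos_2a_sin; ring.
Qed.

Section Profile.

Variables (a b h gamma A : R) (N : nat).
Hypotheses (h_pos : 0 < h) (ba_eq : b - a = INR N * h) (N_pos : (1 <= N)%nat).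

Let t := PI * h / (4 * (b - a)).

Let N_ge_1 : 1 <= INR N.
Proof. apply le_INR in N_pos; exact N_pos. Qed.

Let ba_pos : 0 < b - a.
Proof. generalize N_ge_1; nra. Qed.

Lemma quarter_step_eq : t = PI / (4 * INR N).
Proof.
  assert (HN := N_ge_1).
  unfold t; rewrite ba_eq; field; lra.
Qed.

Lemma quarter_step_bounds : 0 < t <= 1.
Proof.
  assert (HN := N_ge_1).
  assert (Hpi : 3 < PI <= 4) by (generalize PI2_3_2 PI_4; lra).
  rewrite quarter_step_eq; split.
  - apply Rdiv_lt_0_compat; lra.
  - apply Rmult_le_reg_r with (4 * INR N); [lra |].
    unfold Rdiv; rewrite Rmult_assoc, Rinv_l by lra; lra.
Qed.

Lemma sin_quarter_step_pos : 0 < sin t.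
Proof.
  generalize quarter_step_bounds PI2_3_2; intros Ht Hpi.
  apply sin_gt_0; lra.
Qed.

Lemma dirichlet_mu_pos : 0 < dirichlet_mu a b h.
Proof.
  generalize sin_quarter_step_pos; intros Hs.
  unfold dirichlet_mu; fold t.
  apply Rmult_lt_0_compat; [apply Rdiv_lt_0_compat |]; nra.
Qed.

Lemma dirichlet_mu_h2 : dirichlet_mu a b h * h ^ 2 = 4 * sin t ^ 2.
Proof. unfold dirichlet_mu; fold t; field; lra. Qed.

Lemma dirichlet_mu_step : dirichlet_mu a b h * h ^ 2 = 2 - 2 * cos (PI / (2 * INR N)).
Proof.
  assert (HN := N_ge_1).
  replace (PI / (2 * INR N)) with (2 * t) by (rewrite quarter_step_eq; field; lra).
  rewrite cos_2a_sin, dirichlet_mu_h2; ring.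
Qed.

Lemma profile_solves :
  solves_problem a b h (dirichlet_mu a b h) A gamma (dirichlet_profile a b h gamma A).
Proof.
  assert (Hmu := dirichlet_mu_pos).
  assert (Hab := ba_pos).
  set (mu := dirichlet_mu a b h) in *.
  set (vs := dirichlet_profile a b h gamma A).
  split; [intros y _ | split].
  - rewrite Dhp_Dhm_eq by lra.
    set (th := PI * (y - a) / (2 * (b - a))).
    assert (Hsd : vs (y + h) - 2 * vs y + vs (y - h)
                  = - (4 * sin t ^ 2) * ((gamma - A / mu) * cos th - A / mu * sin th)).
    { assert (Hplus : PI * (y + h - a) / (2 * (b - a)) = th + 2 * t)
        by (unfold th, t; field; lra).
      assert (Hminus : PI * (y - h - a) / (2 * (b - a)) = th - 2 * t)
        by (unfold th, t; field; lra).
      assert (Hsum := trig_second_difference (gamma - A / mu) (- (A / mu)) (A / mu) th (2 * t)).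
      replace (2 * t / 2) with t in Hsum by field.
      unfold vs, dirichlet_profile; fold mu th; rewrite Hplus, Hminus; lra. }
    rewrite Hsd, <- dirichlet_mu_h2; unfold vs, dirichlet_profile; fold mu th.
    field; lra.
  - unfold vs, dirichlet_profile.
    replace (PI * (a - a) / (2 * (b - a))) with 0 by (field; lra).
    rewrite cos_0, sin_0; ring.
  - unfold vs, dirichlet_profile.
    replace (PI * (b - a) / (2 * (b - a))) with (PI / 2) by (field; lra).
    rewrite cos_PI2, sin_PI2; ring.
Qed.

Lemma profile_slope_eq :
  - Dhp h (dirichlet_profile a b h gamma A) a
  = 2 * gamma * sin t ^ 2 / h + A * h * (cos t - sin t) / (2 * sin t).
Proof.
  assert (Hs := sin_quarter_step_pos).
  assert (Hmu := dirichlet_mu_pos).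
  assert (Hab := ba_pos).
  destruct profile_solves as [_ [Hva _]].
  unfold Dhp; rewrite Hva; unfold dirichlet_profile.
  replace (PI * (a + h - a) / (2 * (b - a))) with (2 * t) by (unfold t; field; lra).
  replace (A / dirichlet_mu a b h) with (A * h ^ 2 / (4 * sin t ^ 2))
    by (rewrite <- dirichlet_mu_h2; field; lra).
  rewrite cos_2a_sin, sin_2a; field; lra.
Qed.

Lemma one_le_sin_quarter_step : 1 <= INR N * PI * sin t.
Proof.
  assert (HN := N_ge_1).
  assert (Hpi : 3 < PI) by (generalize PI2_3_2; lra).
  assert (Hs := five_sixths_le_sin t ltac:(generalize quarter_step_bounds; lra)).
  assert (Ht : INR N * t = PI / 4) by (rewrite quarter_step_eq; field; lra).
  assert (Hlow : 5 / 6 * (PI * PI / 4) <= INR N * PI * sin t).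
  { replace (5 / 6 * (PI * PI / 4)) with (INR N * PI * (5 / 6 * t)) by (rewrite quarter_step_eq; field; lra).
    apply Rmult_le_compat_l; [nra | exact Hs]. }
  nra.
Qed.

Lemma profile_slope_bound : 0 <= gamma -> 0 <= A ->
  - Dhp h (dirichlet_profile a b h gamma A) a
  <= (gamma + (b - a) ^ 2 * A) * (PI / (2 * (b - a))).
Proof.
  intros Hg HA.
  assert (HN := N_ge_1).
  assert (Hs := sin_quarter_step_pos).
  assert (Ht := quarter_step_bounds).
  assert (Hst : sin t <= t) by (apply Rlt_le, sin_lt_x; lra).
  assert (Hc : cos t <= 1) by (generalize (COS_bound t); lra).
  assert (Hkey := one_le_sin_quarter_step).
  rewrite profile_slope_eq.
  replace ((gamma + (b - a) ^ 2 * A) * (PI / (2 * (b - a))))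
    with (2 * gamma * t / h + A * h * (INR N * PI / 2))
    by (rewrite quarter_step_eq, ba_eq; field; lra).
  apply Rplus_le_compat.
  - unfold Rdiv; apply Rmult_le_compat_r; [left; apply Rinv_0_lt_compat; lra |].
    apply Rmult_le_compat_l; nra.
  - unfold Rdiv at 1; rewrite Rmult_assoc.
    apply Rmult_le_compat_l; [nra |].
    apply (Rmult_le_reg_r (2 * sin t)); [lra |].
    replace ((cos t - sin t) * / (2 * sin t) * (2 * sin t)) with (cos t - sin t) by (field; lra).
    nra.
Qed.

End Profile.

Theorem mainTheorem11 (a b h gamma A : R) (N : nat) :
  0 < h -> (b - a) / h = INR N -> (2 <= N)%nat ->
  0 <= gamma -> 0 <= A ->
  let mu := 4 / h ^ 2 * (sin (PI * h / (4 * (b - a)))) ^ 2 in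
  let vs := fun x : R =>
    (gamma - A / mu) * cos (PI * (x - a) / (2 * (b - a)))
    - A / mu * sin (PI * (x - a) / (2 * (b - a))) + A / mu in
  solves_problem a b h mu A gamma vs /\
  (forall v : R -> R, solves_problem a b h mu A gamma v ->
     forall x, in_closed_grid a b h x -> v x = vs x) /\
  - Dhp h vs a <= (gamma + (b - a) ^ 2 * A) * (PI / (2 * (b - a))).
Proof.
  intros Hh HN HN2 Hg HA mu vs.
  assert (N_pos : (1 <= N)%nat) by lia.
  assert (HNr : 1 <= INR N) by (apply le_INR in N_pos; exact N_pos).
  assert (HL : b - a = INR N * h) by (rewrite <- HN; field; lra).
  assert (Hpi : 3 < PI) by (generalize PI2_3_2; lra).
  assert (Hsol := profile_solves a b h gamma A N Hh HL N_pos).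
  split; [exact Hsol | split].
  - intros v Hv.
    apply (solves_problem_unique a b h mu A gamma (PI / (2 * INR N)) N v vs Hh HL); auto.
    + exact (dirichlet_mu_step a b h N Hh HL N_pos).
    + assert (Hinv : / (2 * INR N) <= / 2) by (apply Rinv_le_contravar; lra).
      apply Rgt_not_eq, sin_gt_0; [apply Rdiv_lt_0_compat | unfold Rdiv]; nra.
    + replace (INR N * (PI / (2 * INR N))) with (PI / 2) by (field; lra).
      rewrite sin_PI2; lra.
  - exact (profile_slope_bound a b h gamma A N Hh HL N_pos Hg HA).
Qed.
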